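(* For natural numbers $n\le m$, $\dim(W_{n,m})\leq\binom{m}{n}\cdot\frac{(m-1)!}{(n-1)!}$.
   Context: $\mathbb{F}$ is a field of characteristic zero; $\mathbb{F}\langle X\rangle$ the free non-unitary associative algebra on $X=\{x_1,x_2,\dots\}$; $(x^n)^T$ the smallest ideal containing $x^n$ invariant under all algebra endomorphisms; $V_m$ the space of multilinear polynomials of degree $m$ in $x_1,\dots,x_m$; $W_{n,m}:=V_m\cap(x^n)^T$. *)

From HB Require Import structures.
From mathcomp Require Import all_boot all_order all_algebra.
Set Implicit Arguments. Unset Strict Implicit. Unset Printing Implicit Defensive.
Import GRing.Theory.
Local Open Scope ring_scope.

(* A word is a seq nat,
   the letter i standing for the variable x_(i+1).  Elements are represented
   as coefficient functions  seq nat -> F  (formal series in noncommuting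
   variables); the free non-unitary algebra F<X> consists of the
   finitely supported ones with zero constant term (predicate [fpoly]). *)

Definition ser (F : fieldType) := seq nat -> F.

Section FreeAlg.
Variable F : fieldType.

Definition ser0 : ser F := fun _ => 0.
Definition serD (f g : ser F) : ser F := fun w => f w + g w.
Definition serZ (c : F) (f : ser F) : ser F := fun w => c * f w.
Definition serM (f g : ser F) : ser F :=
  fun w => \sum_(i < (size w).+1) f (take i w) * g (drop i w).

Definition fpoly (f : ser F) : Prop :=
  f [::] = 0 /\ exists s : seq (seq nat), forall w, w \notin s -> f w = 0.

Definition xvar : ser F := fun w => if w == [:: 0%N] then 1 else 0.
Definition serX (f : ser F) (n : nat) : ser F := iter n.-1 (serM f) f.

Definition endo (psi : ser F -> ser F) : Prop :=
  [/\ forall f, fpoly f -> fpoly (psi f),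
      forall f g, fpoly f -> fpoly g -> psi (serD f g) = serD (psi f) (psi g),
      forall c f, fpoly f -> psi (serZ c f) = serZ c (psi f) &
      forall f g, fpoly f -> fpoly g -> psi (serM f g) = serM (psi f) (psi g)].

Definition Tideal (I : ser F -> Prop) : Prop :=
  (forall f, I f -> fpoly f) /\
  [/\ I ser0,
      forall f g, I f -> I g -> I (serD f g),
      forall c f, I f -> I (serZ c f),
      forall f g, I f -> fpoly g -> I (serM g f) /\ I (serM f g) &
      forall psi f, endo psi -> I f -> I (psi f)].

Definition TxN (n : nat) (f : ser F) : Prop :=
  forall I, Tideal I -> I (serX xvar n) -> I f.

Definition Vm (m : nat) (f : ser F) : Prop :=
  fpoly f /\ forall w, f w != 0 -> perm_eq w (iota 0 m).

Definition W (n m : nat) (f : ser F) : Prop := Vm m f /\ TxN n f.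

Definition lin_indep (fs : seq (ser F)) : Prop :=
  forall c : nat -> F,
    (forall w, \sum_(i < size fs) c i * nth ser0 fs i w = 0) ->
    forall i, (i < size fs)%N -> c i = 0.

End FreeAlg.

(* Let I_n be the span of the symmetrized products
     sym(g_1, ..., g_n) = sum over all orderings of the products g_s1 ... g_sn
   of n elements of F<X>.  It contains x^n = sym(x, ..., x) / n! and is
   stable under endomorphisms.  In characteristic 0 it is also a two-sided
   ideal: merging two neighbouring factors in all orderings of u :: l gives
   n sym(u :: l) when size l = n, and merging u with its left neighbour only
   gives sym(u :: l) - u sym(l), so that
     n u sym(l) = sum_x sym(ux, l - x) + (1 - n) sum_x sym(xu, l - x)
                  + sum_(x <> y) sym(u, xy, l - x - y).
   Hence (x^n)^T is contained in I_n.  Expanding multilinearly, I_n is spanned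
   by the sym(w_1, ..., w_n) of nonempty monomials, and such a product only
   has monomials which are rearrangements of w_1 ... w_n.  A multilinear
   element of degree m thus lies in the span of the sym(w_1, ..., w_n) for
   which w_1 ... w_n is a permutation of x_1 ... x_m, i.e. of one element per
   partition of {1, ..., m} into n nonempty linearly ordered blocks.  There
   are C(m, n) (m-1)! / (n-1)! of them (a Lah number), which bounds the size
   of any linearly independent family. *)

From HB Require Import structures.
From mathcomp Require Import all_boot all_order all_algebra.
From mathcomp Require Import boolp zify.
Set Implicit Arguments. Unset Strict Implicit. Unset Printing Implicit Defensive.
Import GRing.Theory.

Section Insertion.
Variable T : eqType.

Definition insertions (x : T) (w : seq T) : seq (seq T) :=
  [seq take j w ++ x :: drop j w | j <- iota 0 (size w).+1].

Fixpoint insert_in_blocks (x : T) (ws : seq (seq T)) : seq (seq (seq T)) :=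
  if ws is w :: ws' then
    [seq w' :: ws' | w' <- insertions x w] ++ [seq w :: r | r <- insert_in_blocks x ws']
  else [::].

Lemma insert_in_blocks_cons x w ws : insert_in_blocks x (w :: ws) =
  [seq w' :: ws | w' <- insertions x w] ++ [seq w :: r | r <- insert_in_blocks x ws].
Proof. by []. Qed.

Lemma mem_insertions x p q : p ++ x :: q \in insertions x (p ++ q).
Proof.
apply/mapP; exists (size p); first by rewrite mem_iota size_cat; lia.
by rewrite take_size_cat // drop_size_cat.
Qed.

Lemma mem_insert_in_blocks x pre p q suf :
  pre ++ (p ++ x :: q) :: suf \in insert_in_blocks x (pre ++ (p ++ q) :: suf).
Proof.
elim: pre => [|a pre IH]; rewrite insert_in_blocks_cons mem_cat; apply/orP.
  by left; apply/mapP; exists (p ++ x :: q); rewrite ?mem_insertions.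
by right; apply/mapP; exists (pre ++ (p ++ x :: q) :: suf).
Qed.

Lemma size_insert_in_blocks x ws :
  size (insert_in_blocks x ws) = size (flatten ws) + size ws.
Proof. by elim: ws => //= w ws IH; rewrite size_cat !size_map IH size_iota size_cat; lia. Qed.

Lemma insert_in_blocks_size x ws r : r \in insert_in_blocks x ws ->
  size r = size ws /\ size (flatten r) = (size (flatten ws)).+1.
Proof.
elim: ws r => [//|w ws IH] r; rewrite insert_in_blocks_cons mem_cat.
case/orP=> [/mapP[_ /mapP[j _ ->] ->]|/mapP[r' /IH[Er Efl] ->]] /=.
  by rewrite !size_cat /= size_take size_drop; split => //; case: ltnP; lia.
by rewrite !size_cat Er Efl; split => //; lia.
Qed.

End Insertion.

(* [lah_blocks m n] lists the partitions of [0, ..., m-1] into [n] nonempty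
   linearly ordered blocks, each one once up to the order of the blocks:
   the largest letter [m'] either forms a new last block or is inserted
   anywhere into a partition of [0, ..., m'-1] into [n] blocks. *)
Fixpoint lah_blocks (m n : nat) : seq (seq (seq nat)) :=
  match m, n with
  | 0, 0 => [:: [::]]
  | m'.+1, n'.+1 => [seq rcons b [:: m'] | b <- lah_blocks m' n'] ++
                    flatten [seq insert_in_blocks m' b | b <- lah_blocks m' n'.+1]
  | _, _ => [::]
  end.

Lemma lah_blocks_size m n b : b \in lah_blocks m n ->
  size b = n /\ size (flatten b) = m.
Proof.
elim: m n b => [|m IH] [|n] b //=; first by rewrite inE => /eqP ->.
rewrite mem_cat => /orP[/mapP[b' /IH[Eb Efl] ->]|].
  by rewrite size_rcons -cats1 flatten_cat size_cat Eb Efl addn1.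
case/flattenP=> _ /mapP[b' /IH[Eb Efl] ->] /insert_in_blocks_size[-> ->].
by rewrite Eb Efl.
Qed.

Lemma size_lah_blocksS m n : size (lah_blocks m.+1 n.+1) =
  size (lah_blocks m n) + (m + n.+1) * size (lah_blocks m n.+1).
Proof.
rewrite /= size_cat size_map size_flatten /shape -map_comp sumnE big_map.
rewrite (eq_big_seq (fun _ => m + n.+1)); last first.
  by move=> b /lah_blocks_size[Eb Efl]; rewrite /= size_insert_in_blocks Eb Efl.
by rewrite big_const_seq count_predT iter_addn_0 mulnC.
Qed.

Lemma lah_closed_formS m k : 'C(m.+1, k.+2) * m`! =
  k.+1 * ('C(m, k.+1) * m.-1`!) + (m + k.+2) * ('C(m, k.+2) * m.-1`!).
Proof.
case: m => [|m]; first by rewrite !bin0n !muln0.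
rewrite binS factS /=; have := mul_bin_left m.+1 k.+1.
have [km|mk] := leqP k.+1 m.+1; last by rewrite !bin_small //; lia.
move: ('C(m.+1, k.+1)) ('C(m.+1, k.+2)) (m`!) => a b f E.
have -> : (b + a) * (m.+1 * f) = m.+1 * (a * f) + m.+1 * (b * f) by lia.
have : k.+2 * (b * f) = (m.+1 - k.+1) * (a * f) by rewrite !mulnA E.
move: (a * f) (b * f) => A B; nia.
Qed.

Lemma size_lah_blocks m n : 0 < n ->
  size (lah_blocks m n) * n.-1`! = 'C(m, n) * m.-1`!.
Proof.
elim: m n => [|m IH] [|[|k]] // _; rewrite size_lah_blocksS mulnDl.
  have := IH 1 isT; rewrite /= !bin1 !muln1 => ->.
  by case: m {IH} => [|m] //=; rewrite factS; lia.
by rewrite /= lah_closed_formS -!IH //= factS; lia.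
Qed.

Lemma lah_blocks_rcons m n b : b \in lah_blocks m n ->
  rcons b [:: m] \in lah_blocks m.+1 n.+1.
Proof. by move=> bB; rewrite /= mem_cat; apply/orP; left; apply/mapP; exists b. Qed.

Lemma lah_blocks_insert m n pre p q suf :
  pre ++ (p ++ q) :: suf \in lah_blocks m n.+1 ->
  pre ++ (p ++ m :: q) :: suf \in lah_blocks m.+1 n.+1.
Proof.
move=> bB; rewrite /= mem_cat; apply/orP; right; apply/flattenP.
exists (insert_in_blocks m (pre ++ (p ++ q) :: suf)); last exact: mem_insert_in_blocks.
by apply/mapP; exists (pre ++ (p ++ q) :: suf).
Qed.

Lemma perm_blocks_split_max m ws : perm_eq (flatten ws) (iota 0 m.+1) ->
  exists p q rest, perm_eq ws ((p ++ m :: q) :: rest) /\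
                   perm_eq (p ++ q ++ flatten rest) (iota 0 m).
Proof.
move=> Pws; have : m \in flatten ws by rewrite (perm_mem Pws) mem_iota; lia.
case/flattenP=> w wws mw; case/splitPr: mw wws => p q wws.
exists p, q, (rem (p ++ m :: q) ws); split; first exact: perm_to_rem.
rewrite -(perm_cons m); apply: (@perm_trans _ (flatten ws)).
  rewrite perm_sym; apply: perm_trans (perm_flatten (perm_to_rem wws)) _.
  by rewrite /= -catA (perm_catCA p [:: m]).
by apply: perm_trans Pws _; rewrite -addn1 iotaD perm_catC.
Qed.

Lemma lah_blocks_cover m ws : all (fun w => w != [::]) ws ->
  perm_eq (flatten ws) (iota 0 m) -> exists2 b, b \in lah_blocks m (size ws) & perm_eq ws b.
Proof.
elim: m ws => [|m IH] ws ne_ws Pws.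
  case: ws ne_ws Pws => [|[|x w] ws] //=; first by exists [::].
  by move=> _ /perm_nilP.
have [p [q [rest [Pws' Prest]]]] := perm_blocks_split_max Pws.
have /andP[_ ne_rest] : all (fun w => w != [::]) ((p ++ m :: q) :: rest).
  by rewrite -(perm_all _ Pws').
rewrite (perm_size Pws') /=; have [pq0|pqn] := eqVneq (p ++ q) [::].
  have [p0 q0] : p = [::] /\ q = [::] by case: (p) (q) pq0 => [|? ?] [|? ?].
  rewrite p0 q0 /= in Pws' Prest.
  have [b bB Pb] := IH rest ne_rest Prest.
  exists (rcons b [:: m]); first exact: lah_blocks_rcons.
  by apply: perm_trans Pws' _; rewrite perm_sym perm_rcons perm_cons perm_sym.
have ne_pq : all (fun w => w != [::]) ((p ++ q) :: rest) by rewrite /= pqn.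
have [|b bB Pb] := IH ((p ++ q) :: rest) ne_pq; first by rewrite /= -catA.
have pq_b : p ++ q \in b by rewrite -(perm_mem Pb) mem_head.
case/splitPr: pq_b Pb bB => pre suf Pb bB.
exists (pre ++ (p ++ m :: q) :: suf); first exact: lah_blocks_insert.
apply: perm_trans Pws' _; rewrite perm_sym (perm_catCA pre [:: _]) /= perm_cons.
by move: Pb; rewrite perm_sym (perm_catCA pre [:: _]) /= perm_cons perm_sym.
Qed.

Lemma dvdn_fact a b : a <= b -> a`! %| b`!.
Proof. by move=> ab; rewrite -(subKn ab) -(ffact_fact (leq_subr a b)) dvdn_mull. Qed.

Lemma size_lah_blocks_div m n : 0 < n <= m ->
  size (lah_blocks m n) = 'C(m, n) * (m.-1`! %/ n.-1`!).
Proof.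
case/andP=> n_gt0 n_le_m; have n1_le_m1 : n.-1 <= m.-1 by rewrite -!subn1 leq_sub2r.
by rewrite muln_divA ?dvdn_fact // -size_lah_blocks // mulnK // fact_gt0.
Qed.

Local Open Scope ring_scope.

Section SeriesAlgebra.
Variable F : fieldType.
Local Notation S := (ser F).

HB.instance Definition _ := gen_eqMixin S.
HB.instance Definition _ := gen_choiceMixin S.

Definition serN (f : S) : S := fun w => - f w.

Lemma serDA : associative (@serD F).
Proof. by move=> f g h; apply: funext => w; rewrite /serD addrA. Qed.
Lemma serDC : commutative (@serD F).
Proof. by move=> f g; apply: funext => w; rewrite /serD addrC. Qed.
Lemma ser0D : left_id (@ser0 F) (@serD F).
Proof. by move=> f; apply: funext => w; rewrite /serD /ser0 add0r. Qed.
Lemma serND : left_inverse (@ser0 F) serN (@serD F).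
Proof. by move=> f; apply: funext => w; rewrite /serD /ser0 /serN addNr. Qed.

HB.instance Definition _ := GRing.isZmodule.Build S serDA serDC ser0D serND.

Lemma ser_coefD (f g : S) w : (f + g) w = f w + g w. Proof. by []. Qed.

Definition ser1 : S := fun w => (w == [::])%:R.

Lemma serM1 : right_id ser1 (@serM F).
Proof.
move=> f; apply: funext => w; rewrite /serM big_ord_recr /= take_size drop_size /ser1 eqxx mulr1.
rewrite big1 ?add0r // => i _; rewrite -size_eq0 size_drop subn_eq0 leqNgt ltn_ord.
by rewrite mulr0.
Qed.

Lemma ser1M : left_id ser1 (@serM F).
Proof.
move=> f; apply: funext => w; rewrite /serM big_ord_recl /= take0 drop0 /ser1 eqxx mul1r.
rewrite big1 ?addr0 // => i _.
have -> : (take (bump 0 i) w == [::]) = false by move: i; case: w => [[]|].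
by rewrite mul0r.
Qed.

Lemma serMDl : left_distributive (@serM F) (@serD F).
Proof.
move=> f g h; apply: funext => w; rewrite /serM /serD -big_split /=.
by apply: eq_bigr => i _; rewrite mulrDl.
Qed.

Lemma serMDr : right_distributive (@serM F) (@serD F).
Proof.
move=> f g h; apply: funext => w; rewrite /serM /serD -big_split /=.
by apply: eq_bigr => i _; rewrite mulrDr.
Qed.

Lemma ser1_neq0 : ser1 != 0.
Proof. by apply/eqP => /(congr1 (fun f : S => f [::])) /eqP; rewrite /ser1 /= oner_eq0. Qed.

Lemma serMA : associative (@serM F).
Proof.
move=> f g h; apply: funext => w; rewrite /serM.
set N := size w.
(* both sides are sums of f (w[0, j)) * g (w[j, i)) * h (w[i, N)) over j <= i <= N *)
pose a j i := f (take j w) * (g (take (i - j) (drop j w)) * h (drop i w)).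
have -> : \sum_(i < N.+1) (\sum_(j < (size (take i w)).+1)
     f (take j (take i w)) * g (drop j (take i w))) * h (drop i w)
   = \sum_(0 <= i < N.+1) \sum_(0 <= j < N.+1 | (j <= i)%N) a j i.
  rewrite big_mkord; apply: eq_bigr => i _.
  have iN : (i <= N)%N by rewrite -ltnS.
  rewrite size_takel // big_distrl /= -(big_mkord xpredT
    (fun j => f (take j (take i w)) * g (drop j (take i w)) * h (drop i w))).
  rewrite (big_nat_widen 0 i.+1 N.+1) // big_nat_cond [RHS]big_nat_cond.
  apply: eq_bigr => j /andP[/andP[_ jN] ji].
  by rewrite /a take_takel // -mulrA take_drop subnK.
have -> : \sum_(i < N.+1) f (take i w) * (\sum_(j < (size (drop i w)).+1)
      g (take j (drop i w)) * h (drop j (drop i w)))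
   = \sum_(0 <= j < N.+1) \sum_(0 <= k < N.+1 - j) a j (k + j).
  rewrite big_mkord; apply: eq_bigr => j _.
  have jN : (j <= N)%N by rewrite -ltnS.
  rewrite size_drop big_distrr /= -(big_mkord xpredT
    (fun k => f (take j w) * (g (take k (drop j w)) * h (drop k (drop j w))))).
  by rewrite subSn //; apply: eq_bigr => k _; rewrite /a addnK drop_drop.
rewrite (exchange_big_dep_nat xpredT) //=; apply: eq_bigr => j _.
rewrite -(big_addn 0 N.+1 j xpredT) add0n.
by rewrite (big_nat_widenl _ 0) // big_mkcond [RHS]big_mkcond.
Qed.

HB.instance Definition _ :=
  GRing.Zmodule_isNzRing.Build S serMA ser1M serM1 serMDl serMDr ser1_neq0.

Lemma ser_coefM (f g : S) w :
  (f * g) w = \sum_(i < (size w).+1) f (take i w) * g (drop i w).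
Proof. by []. Qed.
Lemma ser_coef1 w : (1 : S) w = (w == [::])%:R. Proof. by []. Qed.

Lemma serZA (a b : F) (f : S) : serZ a (serZ b f) = serZ (a * b) f.
Proof. by apply: funext => w; rewrite /serZ mulrA. Qed.
Lemma serZ1 : left_id 1 (@serZ F).
Proof. by move=> f; apply: funext => w; rewrite /serZ mul1r. Qed.
Lemma serZDr : right_distributive (@serZ F) (@serD F).
Proof. by move=> a f g; apply: funext => w; rewrite /serZ /serD mulrDr. Qed.
Lemma serZDl (f : S) : {morph (@serZ F)^~ f : a b / a + b >-> serD a b}.
Proof. by move=> a b; apply: funext => w; rewrite /serZ /serD mulrDl. Qed.

HB.instance Definition _ := GRing.Zmodule_isLmodule.Build F S serZA serZ1 serZDr serZDl.

Lemma ser_coefZ (c : F) (f : S) w : (c *: f) w = c * f w. Proof. by []. Qed.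

Lemma serZMl (a : F) (f g : S) : a *: (f * g) = (a *: f) * g.
Proof.
apply: funext => w; rewrite ser_coefZ !ser_coefM big_distrr /=.
by apply: eq_bigr => i _; rewrite ser_coefZ mulrA.
Qed.

HB.instance Definition _ := GRing.Lmodule_isLalgebra.Build F S serZMl.

Lemma serZMr (a : F) (f g : S) : a *: (f * g) = f * (a *: g).
Proof.
apply: funext => w; rewrite ser_coefZ !ser_coefM big_distrr /=.
by apply: eq_bigr => i _; rewrite ser_coefZ mulrCA.
Qed.

HB.instance Definition _ := GRing.Lalgebra_isAlgebra.Build F S serZMr.

Lemma ser_coef_sum (I : Type) (r : seq I) (P : pred I) (G : I -> S) w :
  (\sum_(i <- r | P i) G i) w = \sum_(i <- r | P i) G i w.
Proof. exact: (big_morph (fun f : S => f w)). Qed.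

Lemma serX_exp (f : S) k : serX f k.+1 = f ^+ k.+1.
Proof. by elim: k => [|k IH]; rewrite ?expr1 // exprS -IH /serX iterS. Qed.

End SeriesAlgebra.

Section SeqRem.
Variable T : eqType.

Lemma perm_rem (y : T) (s t : seq T) : perm_eq s t -> perm_eq (rem y s) (rem y t).
Proof.
move=> st; have [ys|nys] := boolP (y \in s); last by rewrite !rem_id -?(perm_mem st).
have yt : y \in t by rewrite -(perm_mem st).
rewrite -(perm_cons y); apply: perm_trans (perm_to_rem yt).
by apply: perm_trans st; rewrite perm_sym perm_to_rem.
Qed.

Lemma perm_rem_cons (y c : T) (l : seq T) : y \in l ->
  perm_eq (rem y (c :: l)) (c :: rem y l).
Proof. by move=> yl /=; case: eqP => [->|_] //; apply: perm_to_rem. Qed.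

Lemma size_rem_lt (x : T) (l : seq T) n :
  x \in l -> (size l < n.+1)%N -> (size (rem x l) < n)%N.
Proof. by move=> xl; rewrite size_rem //; case: l xl. Qed.

Lemma remC (x y : T) (s : seq T) : rem x (rem y s) = rem y (rem x s).
Proof.
elim: s => //= a s IH.
have [ay|ay] := eqVneq a y; have [ax|ax] := eqVneq a x => /=.
- by rewrite -ay -ax.
- by rewrite ay eqxx.
- by rewrite ax eqxx.
- by rewrite (negbTE ax) (negbTE ay) IH.
Qed.

Lemma exchange_big_rem (V : nmodType) (s : seq T) (G : T -> T -> V) :
  \sum_(x <- s) \sum_(y <- rem x s) G x y = \sum_(y <- s) \sum_(x <- rem y s) G x y.
Proof.
elim: s => [|a s IH]; first by rewrite !big_nil.
have E (H : T -> T -> V) : \sum_(x <- a :: s) \sum_(y <- rem x (a :: s)) H x y =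
    \sum_(y <- s) H a y + (\sum_(x <- s) H x a + \sum_(x <- s) \sum_(y <- rem x s) H x y).
  rewrite big_cons [rem a _]/= eqxx; congr (_ + _).
  rewrite -big_split big_seq [RHS]big_seq; apply: eq_bigr => x xs.
  by rewrite (perm_big _ (perm_rem_cons a xs)) big_cons.
by rewrite (E G) (E (fun x y => G y x)) IH addrCA.
Qed.

Lemma rem_map_inj (U : eqType) (f : T -> U) : injective f ->
  forall x s, rem (f x) (map f s) = map f (rem x s).
Proof.
by move=> f_inj x; elim=> //= a s IH; rewrite (inj_eq f_inj); case: eqP => //= _; rewrite IH.
Qed.

End SeqRem.

Section SymmetrizedProduct.
Variable R : pzRingType.
Implicit Types (u c : R) (l : seq R).

(* [sym_prod l] is the sum of the products of all orderings of [l], the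
   orderings being counted with multiplicity when [l] has repetitions. *)
Fixpoint sym_prod_rec (k : nat) l : R :=
  if k is k'.+1 then \sum_(x <- l) x * sym_prod_rec k' (rem x l) else 1.
Definition sym_prod l := sym_prod_rec (size l) l.

Lemma sym_prod_nil : sym_prod [::] = 1. Proof. by []. Qed.

Lemma sym_prodE l : l != [::] -> sym_prod l = \sum_(x <- l) x * sym_prod (rem x l).
Proof.
case: l => // a l _.
rewrite (_ : sym_prod _ = \sum_(x <- a :: l) x * sym_prod_rec (size l) (rem x (a :: l))) //.
by rewrite big_seq [RHS]big_seq; apply: eq_bigr => x xl; rewrite /sym_prod size_rem.
Qed.

Lemma perm_sym_prod l l' : perm_eq l l' -> sym_prod l = sym_prod l'.
Proof.
elim: {l}(size l).+1 {-2}l (ltnSn (size l)) l' => // n IH l Hl l' Pl.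
have [l0|ln] := eqVneq l [::]; first by move: Pl; rewrite l0 perm_sym => /perm_nilP ->.
have ln' : l' != [::] by apply: contraNneq ln => l0; apply/eqP/perm_nilP; rewrite -l0.
rewrite !sym_prodE // (perm_big _ Pl) /= big_seq [RHS]big_seq.
apply: eq_bigr => y yl'; rewrite (IH (rem y l) _ (rem y l')) ?perm_rem //.
by rewrite size_rem_lt ?(perm_mem Pl).
Qed.

Lemma sym_prod1 c : sym_prod [:: c] = c.
Proof. by rewrite sym_prodE // big_seq1 /= eqxx sym_prod_nil mulr1. Qed.

Lemma sym_prod_cons c l :
  sym_prod (c :: l) = c * sym_prod l + \sum_(y <- l) y * sym_prod (c :: rem y l).
Proof.
rewrite sym_prodE // big_cons /= eqxx big_seq [X in _ = _ + X]big_seq.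
by congr (_ + _); apply: eq_bigr => y yl; rewrite (perm_sym_prod (perm_rem_cons c yl)).
Qed.

Lemma sum_sym_prod_mull u l :
  \sum_(x <- l) sym_prod (u * x :: rem x l) = sym_prod (u :: l) - sym_prod l * u.
Proof.
elim: {l}(size l).+1 {-2}l (ltnSn (size l)) => // n IH l Hl.
have [->|ln] := eqVneq l [::].
  by rewrite big_nil sym_prod_cons big_nil addr0 mulr1 mul1r subrr.
have -> : \sum_(x <- l) sym_prod (u * x :: rem x l) =
    \sum_(x <- l) u * x * sym_prod (rem x l) +
    \sum_(x <- l) \sum_(y <- rem x l) y * sym_prod (u * x :: rem x (rem y l)).
  rewrite -big_split; apply: eq_bigr => x _; rewrite sym_prod_cons; congr (_ + _).
  by apply: eq_bigr => y _; rewrite remC.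
rewrite (exchange_big_rem l (fun x y => y * sym_prod (u * x :: rem x (rem y l)))) /=.
have -> : \sum_(y <- l) \sum_(x <- rem y l) y * sym_prod (u * x :: rem x (rem y l)) =
    \sum_(y <- l) y * (sym_prod (u :: rem y l) - sym_prod (rem y l) * u).
  rewrite big_seq [RHS]big_seq; apply: eq_bigr => y yl.
  by rewrite -big_distrr /= IH // size_rem_lt.
rewrite sym_prod_cons (sym_prodE ln) mulr_sumr mulr_suml -addrA -sumrB.
by congr (_ + _); apply: eq_bigr => x _; rewrite ?mulrBr !mulrA.
Qed.

Lemma sym_prodEr l : l != [::] -> sym_prod l = \sum_(x <- l) sym_prod (rem x l) * x.
Proof.
elim: {l}(size l).+1 {-2}l (ltnSn (size l)) => // n IH l Hl ln.
case: l Hl ln => // c [|d l'] Hl _; first by rewrite sym_prod1 big_seq1 /= eqxx mul1r.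
have rem_neq0 x : x \in [:: c, d & l'] -> rem x [:: c, d & l'] != [::].
  by move=> xl; rewrite -size_eq0 size_rem.
move: [:: c, d & l'] (isT : [:: c, d & l'] != [::]) Hl rem_neq0 => l ln Hl rem_neq0.
rewrite sym_prodE // big_seq (eq_bigr (fun x => \sum_(y <- rem x l)
    x * sym_prod (rem x (rem y l)) * y)); last first.
  move=> x xl; rewrite IH ?rem_neq0 ?size_rem_lt // big_distrr /=.
  by apply: eq_bigr => y _; rewrite mulrA remC.
rewrite -big_seq exchange_big_rem big_seq [RHS]big_seq.
by apply: eq_bigr => y yl; rewrite -big_distrl /= -sym_prodE ?rem_neq0.
Qed.

Lemma sum_sym_prod_merge l : \sum_(x <- l) \sum_(y <- rem x l)
  sym_prod (x * y :: rem y (rem x l)) = (size l).-1%:R * sym_prod l.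
Proof.
have [->|ln] := eqVneq l [::]; first by rewrite big_nil mul0r.
rewrite big_seq (eq_bigr (fun x => sym_prod l - sym_prod (rem x l) * x)); last first.
  move=> x xl; rewrite sum_sym_prod_mull.
  by rewrite (perm_sym_prod (perm_to_rem xl)).
rewrite -big_seq sumrB big_const_seq count_predT iter_addr_0 -sym_prodEr //.
by case: l ln => // a l _; rewrite /= mulrSr addrK mulr_natl.
Qed.

Lemma sym_prod_nseq c k : sym_prod (nseq k c) = k`!%:R * c ^+ k.
Proof.
elim: k => [|k IH]; first by rewrite mul1r.
rewrite sym_prodE // big_seq (eq_bigr (fun _ => c * sym_prod (nseq k c))); last first.
  by move=> y /nseqP[-> _] /=; rewrite eqxx.
rewrite -big_seq big_const_seq count_predT iter_addr_0 size_nseq IH factS natrM.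
by rewrite mulrA (commr_nat c) -mulrA -exprS -(mulr_natl (k`!%:R * _)) mulrA.
Qed.

End SymmetrizedProduct.

Lemma sym_prod_c (R : pzRingType) (l : seq R) : @sym_prod R^c l = sym_prod l.
Proof.
elim: {l}(size l).+1 {-2}l (ltnSn (size l)) => // n IH l Hl.
have [->|ln] := eqVneq l [::]; first by [].
rewrite (sym_prodE (R := R^c)) // (sym_prodEr ln) big_seq [RHS]big_seq.
by apply: eq_bigr => x xl; rewrite IH // size_rem_lt.
Qed.

Section SymmetrizedProductMul.
Variable R : pzRingType.
Implicit Types (u : R) (l : seq R).

Lemma sum_sym_prod_mulr u l :
  \sum_(x <- l) sym_prod (x * u :: rem x l) = sym_prod (u :: l) - u * sym_prod l.
Proof.
have := sum_sym_prod_mull (R := R^c) u l.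
by under eq_bigr => x _ do rewrite sym_prod_c; rewrite !sym_prod_c.
Qed.

(* Merging two neighbouring factors of an ordering of [u :: l] gives either
   [u * x], or [x * u], or [x * y] with [x, y] in [l]. *)
Definition sym_mergel u l := \sum_(x <- l) sym_prod (u * x :: rem x l).
Definition sym_merger u l := \sum_(x <- l) sym_prod (x * u :: rem x l).
Definition sym_merge2 u l :=
  \sum_(x <- l) \sum_(y <- rem x l) sym_prod (u :: x * y :: rem y (rem x l)).

Lemma natmul_sym_prod_cons u l :
  (size l)%:R * sym_prod (u :: l) = sym_mergel u l + sym_merger u l + sym_merge2 u l.
Proof.
rewrite (_ : size l = (size (u :: l)).-1) // -sum_sym_prod_merge big_cons [rem u _]/= eqxx.
rewrite -addrA; congr (_ + _); rewrite -big_split big_seq [RHS]big_seq.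
apply: eq_bigr => x xl; have Pu := perm_rem_cons u xl.
rewrite (perm_big _ Pu) big_cons; congr (_ + _).
  apply/perm_sym_prod; rewrite perm_cons.
  by apply: perm_trans (perm_rem u Pu) _; rewrite /= eqxx.
rewrite big_seq [RHS]big_seq; apply: eq_bigr => y yl; apply: perm_sym_prod.
apply: (@perm_trans _ (x * y :: u :: rem y (rem x l))).
  by rewrite perm_cons; apply: perm_trans (perm_rem y Pu) _; apply: perm_rem_cons.
by rewrite (perm_catCA [:: x * y] [:: u]).
Qed.

Lemma natmul_mul_sym_prod u l : (size l)%:R * (u * sym_prod l) =
  sym_mergel u l + sym_merger u l + sym_merge2 u l - (size l)%:R * sym_merger u l.
Proof. by rewrite -natmul_sym_prod_cons /sym_merger sum_sym_prod_mulr mulrBr opprB addrC subrK. Qed.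

Lemma natmul_sym_prod_mul u l : (size l)%:R * (sym_prod l * u) =
  sym_mergel u l + sym_merger u l + sym_merge2 u l - (size l)%:R * sym_mergel u l.
Proof. by rewrite -natmul_sym_prod_cons /sym_mergel sum_sym_prod_mull mulrBr opprB addrC subrK. Qed.

End SymmetrizedProductMul.

Section SymmetrizedProductClosed.
Variables (R : pzRingType) (P : R -> Prop).
Hypotheses (P0 : P 0) (PD : forall x y, P x -> P y -> P (x + y))
           (PM : forall x y, P x -> P y -> P (x * y)).

Lemma sym_prod_closed (l : seq R) : l != [::] -> {in l, forall x, P x} -> P (sym_prod l).
Proof.
elim: {l}(size l).+1 {-2}l (ltnSn (size l)) => // n IH l Hl ln Pl.
case: l Hl ln Pl => // c [|d l'] Hl _ Pl; first by rewrite sym_prod1; apply: Pl; rewrite inE.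
rewrite sym_prodE // big_seq; apply: big_ind => // x xl; apply: PM; first exact: Pl.
apply: IH; first exact: size_rem_lt.
  by rewrite -size_eq0 size_rem.
by move=> y /mem_rem; apply: Pl.
Qed.

Variable psi : R -> R.
Hypotheses (psiD : forall x y, P x -> P y -> psi (x + y) = psi x + psi y)
           (psiM : forall x y, P x -> P y -> psi (x * y) = psi x * psi y).

Lemma morph_sum_closed (I : eqType) (r : seq I) (G : I -> R) : {in r, forall i, P (G i)} ->
  psi (\sum_(i <- r) G i) = \sum_(i <- r) psi (G i).
Proof.
have psi0 : psi 0 = 0 by apply: (addrI (psi 0)); rewrite -psiD // !addr0.
elim: r => [|a r IH] PG; first by rewrite !big_nil.
have PGa : P (G a) by apply: PG; rewrite mem_head.
have PGr : {in r, forall i, P (G i)} by move=> i ir; apply: PG; rewrite inE ir orbT.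
by rewrite !big_cons psiD ?IH // big_seq; apply: big_ind.
Qed.

Lemma sym_prod_morph (l : seq R) : l != [::] -> {in l, forall x, P x} ->
  psi (sym_prod l) = sym_prod (map psi l).
Proof.
elim: {l}(size l).+1 {-2}l (ltnSn (size l)) => // n IH l Hl ln Pl.
case: l Hl ln Pl => // c [|d l'] Hl _ Pl; first by rewrite /= !sym_prod1.
have rem_neq0 x : x \in [:: c, d & l'] -> rem x [:: c, d & l'] != [::].
  by move=> xl; rewrite -size_eq0 size_rem.
move: [:: c, d & l'] (isT : [:: c, d & l'] != [::]) Hl rem_neq0 Pl => l ln Hl rem_neq0 Pl.
have Prem x : x \in l -> P (sym_prod (rem x l)).
  by move=> xl; apply: sym_prod_closed; [apply: rem_neq0 | move=> y /mem_rem; apply: Pl].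
rewrite sym_prodE // morph_sum_closed => [|x xl]; last by apply: PM; [apply: Pl | apply: Prem].
rewrite sym_prodE -?size_eq0 ?size_map ?size_eq0 // big_map big_seq [RHS]big_seq.
apply: eq_bigr => x xl; rewrite psiM; [|exact: Pl|exact: Prem].
rewrite IH ?size_rem_lt ?rem_neq0 //; last by move=> y /mem_rem; apply: Pl.
congr (_ * _); apply: perm_sym_prod; rewrite -(perm_cons (psi x)).
apply: (@perm_trans _ (map psi l)); last exact/perm_to_rem/map_f.
by rewrite perm_sym; apply: (perm_map psi (perm_to_rem xl)).
Qed.

End SymmetrizedProductClosed.

Section SymmetrizedProductLinear.
Variables (K : pzRingType) (R : algType K).
Implicit Types (a b : R) (l : seq R).

Lemma sym_prod_consD a b l : sym_prod (a + b :: l) = sym_prod (a :: l) + sym_prod (b :: l).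
Proof.
elim: {l}(size l).+1 {-2}l (ltnSn (size l)) a b => // n IH l Hl a b.
rewrite !sym_prod_cons mulrDl addrACA -big_split /=; congr (_ + _).
by rewrite big_seq [RHS]big_seq; apply: eq_bigr => y yl; rewrite IH ?size_rem_lt // mulrDr.
Qed.

Lemma sym_prod_consZ (c : K) a l : sym_prod (c *: a :: l) = c *: sym_prod (a :: l).
Proof.
elim: {l}(size l).+1 {-2}l (ltnSn (size l)) a => // n IH l Hl a.
rewrite !sym_prod_cons scalerDr -scalerAl scaler_sumr; congr (_ + _).
by rewrite big_seq [RHS]big_seq; apply: eq_bigr => y yl; rewrite IH ?size_rem_lt // scalerAr.
Qed.

Lemma sym_prod_cons_sum (I : Type) (r : seq I) (c : I -> K) (g : I -> R) l :
  sym_prod ((\sum_(i <- r) c i *: g i) :: l) = \sum_(i <- r) c i *: sym_prod (g i :: l).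
Proof.
elim: r => [|i r IH]; last by rewrite !big_cons sym_prod_consD sym_prod_consZ IH.
by rewrite !big_nil; have := sym_prod_consZ 0 0 l; rewrite !scale0r.
Qed.

End SymmetrizedProductLinear.

Section LinearSpan.
Variables (F : fieldType) (V : lmodType F) (T : eqType).
Variables (gen : T -> V) (ok : T -> Prop).

Definition lin_span (f : V) := exists L : seq (F * T),
  f = \sum_(p <- L) p.1 *: gen p.2 /\ forall p, p \in L -> ok p.2.

Lemma lin_span0 : lin_span 0.
Proof. by exists [::]; rewrite big_nil. Qed.

Lemma lin_spanD f g : lin_span f -> lin_span g -> lin_span (f + g).
Proof.
move=> [L1 [-> ok1]] [L2 [-> ok2]]; exists (L1 ++ L2); rewrite big_cat.
by split=> // p; rewrite mem_cat => /orP[/ok1|/ok2].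
Qed.

Lemma lin_spanZ c f : lin_span f -> lin_span (c *: f).
Proof.
move=> [L [-> okL]]; exists [seq (c * p.1, p.2) | p <- L]; split.
  by rewrite big_map scaler_sumr; apply: eq_bigr => p _; rewrite scalerA.
by move=> q; case/mapP=> p pL ->; apply: okL pL.
Qed.

Lemma lin_spanB f g : lin_span f -> lin_span g -> lin_span (f - g).
Proof. by move=> sf sg; rewrite -scaleN1r; apply: lin_spanD => //; apply: lin_spanZ. Qed.

Lemma lin_span_gen t : ok t -> lin_span (gen t).
Proof. by exists [:: (1, t)]; rewrite big_seq1 scale1r; split=> // p /[!inE] /eqP ->. Qed.

Lemma lin_span_sum (I : eqType) (r : seq I) (G : I -> V) :
  {in r, forall i, lin_span (G i)} -> lin_span (\sum_(i <- r) G i).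
Proof.
by move=> sG; rewrite big_seq; apply: big_ind => //; [apply: lin_span0 | apply: lin_spanD].
Qed.

Lemma lin_span_natmulK (k : nat) f : [pchar F] =i pred0 -> k != 0%N ->
  lin_span (f *+ k) -> lin_span f.
Proof.
move=> /pcharf0P charF0 k_neq0 /(lin_spanZ (k%:R)^-1).
by rewrite -scaler_nat scalerA mulVf ?scale1r // charF0.
Qed.

End LinearSpan.

Section SeqSpan.
Variables (F : fieldType) (V : lmodType F).

Definition seq_span (gs : seq V) := lin_span id (fun g => g \in gs).

Lemma seq_span_coef (gs : seq V) f : seq_span gs f ->
  exists c : 'I_(size gs) -> F, f = \sum_j c j *: gs`_j.
Proof.
move=> [L [-> okL]]; elim: L okL => [|[a g] L IH] okL.
  by exists (fun _ => 0); rewrite big_nil big1 // => j _; rewrite scale0r.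
rewrite big_cons; have [|c ->] := IH; first by move=> p pL; apply: okL; rewrite inE pL orbT.
have g_gs : g \in gs by apply: (okL (a, g)); rewrite mem_head.
have lt_j0 : (index g gs < size gs)%N by rewrite index_mem.
pose j0 := Ordinal lt_j0; exists (fun j => (j == j0)%:R * a + c j).
under [RHS]eq_bigr => j _ do rewrite scalerDl.
rewrite big_split /=; congr (_ + _).
rewrite (bigD1 j0) //= eqxx mul1r nth_index // big1 ?addr0 // => j /negbTE ->.
by rewrite mul0r scale0r.
Qed.

End SeqSpan.

Section FreeAlgebra.
Variable F : fieldType.
Local Notation S := (ser F).

Definition mon (w : seq nat) : S := fun v => (v == w)%:R.

Lemma fpoly0 : fpoly (0 : S).
Proof. by split => //; exists [::]. Qed.

Lemma fpolyD (f g : S) : fpoly f -> fpoly g -> fpoly (f + g).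
Proof.
move=> [f0 [sf Hf]] [g0 [sg Hg]]; split; first by rewrite ser_coefD f0 g0 addr0.
exists (sf ++ sg) => w; rewrite mem_cat negb_or => /andP[wf wg].
by rewrite ser_coefD Hf // Hg // addr0.
Qed.

Lemma fpolyZ c (f : S) : fpoly f -> fpoly (c *: f).
Proof.
move=> [f0 [sf Hf]]; split; first by rewrite ser_coefZ f0 mulr0.
by exists sf => w wf; rewrite ser_coefZ Hf // mulr0.
Qed.

Lemma fpolyM (f g : S) : fpoly f -> fpoly g -> fpoly (f * g).
Proof.
move=> [f0 [sf Hf]] [g0 [sg Hg]]; split.
  by rewrite ser_coefM big_ord_recl big_ord0 /= f0 mul0r addr0.
exists [seq u ++ v | u <- sf, v <- sg] => w ws; rewrite ser_coefM big1 // => i _.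
have [tf|tf] := boolP (take i w \in sf); last by rewrite Hf // mul0r.
have [dg|dg] := boolP (drop i w \in sg); last by rewrite Hg // mulr0.
by move: ws; rewrite -{1}(cat_take_drop i w) allpairs_f.
Qed.

Lemma fpoly_sum (I : eqType) (r : seq I) (G : I -> S) :
  {in r, forall i, fpoly (G i)} -> fpoly (\sum_(i <- r) G i).
Proof. by move=> fG; rewrite big_seq; apply: big_ind => //; [apply: fpoly0 | apply: fpolyD]. Qed.

Lemma fpoly_sym_prod (l : seq S) : l != [::] -> {in l, forall x, fpoly x} ->
  fpoly (sym_prod l).
Proof. exact: (sym_prod_closed fpoly0 fpolyD fpolyM). Qed.

Lemma fpoly_xvar : fpoly (@xvar F).
Proof. by split => //; exists [:: [:: 0%N]] => w; rewrite inE /xvar => /negbTE ->. Qed.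

Lemma fpoly_mon_expansion (f : S) : fpoly f ->
  exists s, all (fun w => w != [::]) s /\ f = \sum_(w <- s) f w *: mon w.
Proof.
move=> [f0 [s0 Hf]]; set s := undup [seq w <- s0 | w != [::]].
exists s; split; first by apply/allP => w; rewrite mem_undup mem_filter => /andP[].
apply: funext => v; rewrite ser_coef_sum.
under eq_bigr => w _ do rewrite ser_coefZ /mon.
have [vs|vs] := boolP (v \in s).
  rewrite (bigD1_seq v) ?undup_uniq //= eqxx mulr1 big1 ?addr0 // => w.
  by rewrite eq_sym => /negbTE ->; rewrite mulr0.
rewrite big1_seq => [|w /andP[_ ws]]; last first.
  by case: eqP => [ev|]; [rewrite ev ws in vs | rewrite mulr0].
move: vs; rewrite mem_undup mem_filter negb_and negbK => /orP[/eqP->//|].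
exact: Hf.
Qed.

Definition sym_ideal_gens (n : nat) (l : seq S) := size l = n /\ {in l, forall x, fpoly x}.

Definition sym_ideal (n : nat) := lin_span (@sym_prod S) (sym_ideal_gens n).

Lemma sym_ideal_gens_cons n g x l : (0 < n)%N -> sym_ideal_gens n l -> fpoly g ->
  x \in l -> sym_ideal_gens n (g :: rem x l).
Proof.
move=> n_gt0 [nl fl] fg xl; split; first by rewrite /= size_rem // nl prednK.
by move=> y /[!inE] /orP[/eqP->//|/mem_rem]; apply: fl.
Qed.

Lemma sym_ideal_gens_cons2 n g z x y l : sym_ideal_gens n l -> fpoly g -> fpoly z ->
  x \in l -> y \in rem x l -> sym_ideal_gens n (g :: z :: rem y (rem x l)).
Proof.
move=> [<- fl] fg fz xl yl; split.
  have : (0 < size (rem x l))%N by case: (rem x l) yl.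
  by rewrite /= !size_rem //; case: (size l) => [|[|k]].
by move=> w; rewrite !inE => /orP[/eqP->//|/orP[/eqP->//|/mem_rem/mem_rem]]; apply: fl.
Qed.

Section SymIdeal.
Variable n : nat.
Hypothesis n_gt0 : (0 < n)%N.

Lemma sym_ideal_mergel g l : sym_ideal_gens n l -> fpoly g -> sym_ideal n (sym_mergel g l).
Proof.
move=> gl fg; apply: lin_span_sum => x xl; apply: lin_span_gen.
by apply: sym_ideal_gens_cons => //; apply: fpolyM => //; apply: gl.2.
Qed.

Lemma sym_ideal_merger g l : sym_ideal_gens n l -> fpoly g -> sym_ideal n (sym_merger g l).
Proof.
move=> gl fg; apply: lin_span_sum => x xl; apply: lin_span_gen.
by apply: sym_ideal_gens_cons => //; apply: fpolyM => //; apply: gl.2.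
Qed.

Lemma sym_ideal_merge2 g l : sym_ideal_gens n l -> fpoly g -> sym_ideal n (sym_merge2 g l).
Proof.
move=> gl fg; apply: lin_span_sum => x xl; apply: lin_span_sum => y yl.
apply: lin_span_gen; apply: sym_ideal_gens_cons2 => //.
by apply: fpolyM; apply: gl.2 => //; apply: mem_rem yl.
Qed.

Lemma sym_ideal_merges g l : sym_ideal_gens n l -> fpoly g ->
  sym_ideal n (sym_mergel g l + sym_merger g l + sym_merge2 g l).
Proof.
move=> gl fg; apply: lin_spanD; last exact: sym_ideal_merge2.
by apply: lin_spanD; [apply: sym_ideal_mergel | apply: sym_ideal_merger].
Qed.

Lemma sym_ideal_gens_neq0 l : sym_ideal_gens n l -> l != [::].
Proof. by case=> nl _; rewrite -size_eq0 nl -lt0n. Qed.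

Lemma sym_ideal_fpoly f : sym_ideal n f -> fpoly f.
Proof.
move=> [L [-> okL]]; apply: fpoly_sum => p pL; apply: fpolyZ.
by apply: fpoly_sym_prod; [apply: sym_ideal_gens_neq0 (okL p pL) | apply: (okL p pL).2].
Qed.

Hypothesis charF0 : [pchar F] =i pred0.

Lemma sym_ideal_mul_sym_prod g l : sym_ideal_gens n l -> fpoly g ->
  sym_ideal n (g * sym_prod l).
Proof.
move=> gl fg; apply: (lin_span_natmulK charF0 (_ : n != 0%N)); first by rewrite -lt0n.
rewrite -mulr_natl; have := natmul_mul_sym_prod g l; rewrite gl.1 => ->.
rewrite mulr_natl -scaler_nat.
by apply: lin_spanB; [apply: sym_ideal_merges | apply/lin_spanZ/sym_ideal_merger].
Qed.

Lemma sym_ideal_sym_prod_mul g l : sym_ideal_gens n l -> fpoly g ->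
  sym_ideal n (sym_prod l * g).
Proof.
move=> gl fg; apply: (lin_span_natmulK charF0 (_ : n != 0%N)); first by rewrite -lt0n.
rewrite -mulr_natl; have := natmul_sym_prod_mul g l; rewrite gl.1 => ->.
rewrite mulr_natl -scaler_nat.
by apply: lin_spanB; [apply: sym_ideal_merges | apply/lin_spanZ/sym_ideal_mergel].
Qed.

Lemma sym_ideal_mull g f : fpoly g -> sym_ideal n f -> sym_ideal n (g * f).
Proof.
move=> fg [L [-> okL]]; rewrite mulr_sumr; apply: lin_span_sum => p pL.
by rewrite -scalerAr; apply/lin_spanZ/sym_ideal_mul_sym_prod => //; apply: okL.
Qed.

Lemma sym_ideal_mulr g f : fpoly g -> sym_ideal n f -> sym_ideal n (f * g).
Proof.
move=> fg [L [-> okL]]; rewrite mulr_suml; apply: lin_span_sum => p pL.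
by rewrite -scalerAl; apply/lin_spanZ/sym_ideal_sym_prod_mul => //; apply: okL.
Qed.

Lemma sym_ideal_endo psi f : endo psi -> sym_ideal n f -> sym_ideal n (psi f).
Proof.
move=> [psi_fpoly psiD psiZ psiM] [L [-> okL]].
have fpoly_gen p : p \in L -> fpoly (sym_prod p.2).
  by move=> /okL gp; apply: fpoly_sym_prod; [apply: sym_ideal_gens_neq0 gp | apply: gp.2].
rewrite (morph_sum_closed fpoly0 fpolyD psiD) => [|p pL]; last exact/fpolyZ/fpoly_gen.
apply: lin_span_sum => p pL.
have -> : psi (p.1 *: sym_prod p.2) = p.1 *: psi (sym_prod p.2) by apply/psiZ/fpoly_gen.
apply: lin_spanZ.
have [size_p fpoly_p] := okL p pL.
rewrite (sym_prod_morph fpoly0 fpolyD fpolyM psiD psiM) //; last first.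
  exact: sym_ideal_gens_neq0 (okL p pL).
apply: lin_span_gen; split; first by rewrite size_map.
by move=> _ /mapP[x xl ->]; apply/psi_fpoly/fpoly_p.
Qed.

Lemma sym_ideal_xn : sym_ideal n (serX (@xvar F) n).
Proof.
have nf : (n`!%:R : F) != 0 by move/pcharf0P: charF0 => ->; rewrite -lt0n fact_gt0.
have -> : serX (@xvar F) n = (n`!%:R : F)^-1 *: sym_prod (nseq n (@xvar F)).
  rewrite sym_prod_nseq mulr_natl -scaler_nat scalerA mulVf // scale1r.
  by rewrite -[in LHS](prednK n_gt0) serX_exp prednK.
apply/lin_spanZ/lin_span_gen; split; first by rewrite size_nseq.
by move=> x /nseqP[-> _]; apply: fpoly_xvar.
Qed.

Lemma Tideal_sym_ideal : Tideal (sym_ideal n).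
Proof.
split; first exact: sym_ideal_fpoly.
split=> [|f g|c f|f g If fg|psi f]; first exact: lin_span0.
- exact: lin_spanD.
- exact: lin_spanZ.
- by split; [apply: sym_ideal_mull | apply: sym_ideal_mulr].
- exact: sym_ideal_endo.
Qed.

Lemma TxN_sym_ideal f : TxN n f -> sym_ideal n f.
Proof. by apply; [apply: Tideal_sym_ideal | apply: sym_ideal_xn]. Qed.

End SymIdeal.

Definition mon_span (n : nat) :=
  lin_span (fun ws => sym_prod (map mon ws)) (fun ws => size ws = n /\ all (fun w => w != [::]) ws).

Lemma sym_prod_mon_expansion (l : seq S) (ms : seq (seq nat)) :
  {in l, forall x, fpoly x} -> all (fun w => w != [::]) ms ->
  mon_span (size ms + size l) (sym_prod (map mon ms ++ l)).
Proof.
elim: l ms => [|x l IH] ms fl ne_ms.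
  by rewrite cats0 addn0; apply: lin_span_gen.
have [s [ne_s xE]] := fpoly_mon_expansion (fl x (mem_head x l)).
have to_front ms' (y : S) : perm_eq (map mon ms' ++ y :: l) (y :: map mon ms' ++ l).
  by rewrite (perm_catCA (map mon ms') [:: y] l).
rewrite (perm_sym_prod (to_front ms x)) xE sym_prod_cons_sum.
apply: lin_span_sum => w ws; apply: lin_spanZ.
rewrite -(perm_sym_prod (to_front ms (mon w))) -cat_rcons -map_rcons.
rewrite (_ : size ms + size (x :: l) = size (rcons ms w) + size l)%N; last first.
  by rewrite size_rcons addSnnS.
apply: IH => [y yl|]; first by apply: fl; rewrite inE yl orbT.
by rewrite -cats1 all_cat ne_ms /= (allP ne_s).
Qed.

Lemma sym_ideal_mon_span n f : sym_ideal n f -> mon_span n f.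
Proof.
move=> [L [-> okL]]; apply: lin_span_sum => p pL; apply: lin_spanZ.
have [<- fpoly_p] := okL p pL.
exact: (sym_prod_mon_expansion (ms := [::])).
Qed.

Lemma mon_inj : injective mon.
Proof.
move=> w w' /(congr1 (fun f : S => f w)); rewrite /mon eqxx.
by case: eqP => // _ /eqP; rewrite oner_eq0.
Qed.

Lemma sumr_neq0_exists (I : eqType) (r : seq I) (G : I -> F) :
  \sum_(i <- r) G i != 0 -> exists2 i, i \in r & G i != 0.
Proof.
have [/hasP[i ir Gi] _|/hasPn G0] := boolP (has (fun i => G i != 0) r); first by exists i.
by rewrite big1_seq ?eqxx // => i /andP[_ /G0]; rewrite negbK => /eqP.
Qed.

Lemma mon_mul_coef_neq0 w (g : S) v : (mon w * g) v != 0 ->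
  exists2 v', v = w ++ v' & g v' != 0.
Proof.
rewrite ser_coefM => /sumr_neq0_exists[i _]; rewrite /mon.
case: (eqVneq (take i v) w) => [<- | _]; last by rewrite mul0r eqxx.
by rewrite mul1r => g_neq0; exists (drop i v); rewrite ?cat_take_drop.
Qed.

Lemma sym_prod_mon_coef_neq0 ws v : sym_prod (map mon ws) v != 0 -> perm_eq v (flatten ws).
Proof.
elim: {ws}(size ws).+1 {-2}ws (ltnSn (size ws)) v => // k IH ws ws_lt v.
case: ws ws_lt => [|w0 ws0] ws_lt.
  by rewrite sym_prod_nil ser_coef1; case: (eqVneq v [::]) => [-> | _] //; rewrite eqxx.
set ws := w0 :: ws0; rewrite sym_prodE // ser_coef_sum big_map => /sumr_neq0_exists[w wws].
rewrite rem_map_inj; last exact: mon_inj.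
case/mon_mul_coef_neq0=> v' -> /(IH _ (size_rem_lt wws ws_lt)) Pv'.
apply: (@perm_trans _ (w ++ flatten (rem w ws))); first by rewrite perm_cat2l.
by rewrite perm_sym (perm_flatten (perm_to_rem wws)).
Qed.

Lemma Vm_sym_prod_mon_filter m (L : seq (F * seq (seq nat))) f : Vm m f ->
  f = \sum_(p <- L) p.1 *: sym_prod (map mon p.2) ->
  f = \sum_(p <- L | perm_eq (flatten p.2) (iota 0 m)) p.1 *: sym_prod (map mon p.2).
Proof.
move=> [_ Vf] fE; apply: funext => v; rewrite ser_coef_sum.
have term0 p : ~~ perm_eq v (flatten p.2) -> (p.1 *: sym_prod (map mon p.2)) v = 0.
  move=> Pv; rewrite ser_coefZ; case: (eqVneq (sym_prod (map mon p.2) v) 0) => [-> | ].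
    by rewrite mulr0.
  by move/sym_prod_mon_coef_neq0; rewrite (negbTE Pv).
have [Pv|Pv] := boolP (perm_eq v (iota 0 m)).
  rewrite fE ser_coef_sum (bigID (fun p => perm_eq (flatten p.2) (iota 0 m))) /=.
  rewrite [X in _ + X]big1 ?addr0 // => p Pp; apply: term0.
  by apply: contra Pp => Pv'; rewrite perm_sym in Pv'; apply: perm_trans Pv' Pv.
rewrite big1 => [|p Pp]; last by apply: term0; apply: contra Pv => Pv'; apply: perm_trans Pv' Pp.
by apply/eqP; apply: contraNT Pv => /Vf.
Qed.

Definition lah_sym_prods m n := [seq sym_prod (map mon b) | b <- lah_blocks m n].

Lemma Vm_mon_span_lah m n f : Vm m f -> mon_span n f -> seq_span (lah_sym_prods m n) f.
Proof.
move=> Vf [L [fE okL]]; rewrite (Vm_sym_prod_mon_filter Vf fE) -big_filter.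
apply: lin_span_sum => p; rewrite mem_filter => /andP[Pp pL]; apply: lin_spanZ.
have [size_p ne_p] := okL p pL.
have [b bB Pb] := lah_blocks_cover ne_p Pp.
rewrite (perm_sym_prod (perm_map mon Pb)); apply: lin_span_gen.
by apply/mapP; exists b; rewrite // -size_p.
Qed.

Lemma lin_indep_leq_size_span (gs fs : seq S) : lin_indep fs ->
  (forall i, (i < size fs)%N -> seq_span gs fs`_i) -> (size fs <= size gs)%N.
Proof.
move=> indep span_fs; set k := size fs; set N := size gs.
have /fin_all_exists [c fsE] : forall i : 'I_k, exists c : 'I_N -> F,
    fs`_i = \sum_j c j *: gs`_j by move=> i; apply/seq_span_coef/span_fs.
pose M : 'M[F]_(k, N) := \matrix_(i, j) c i j.
rewrite leqNgt; apply/negP => N_lt_k.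
have : kermx M != 0.
  rewrite kermx_eq0 /row_free; apply: contraTneq N_lt_k => <-.
  by rewrite -leqNgt rank_leq_col.
case/rowV0Pn=> v /sub_kermxP vM; apply/negP; rewrite negbK; apply/eqP/rowP => i.
pose d t := odflt 0 (omap (v 0) (insub t)).
have dE (t : 'I_k) : d t = v 0 t by rewrite /d valK.
rewrite mxE -dE; apply: indep (ltn_ord i) => w.
transitivity (\sum_(j < N) (v *m M) 0 j * gs`_j w); last first.
  by rewrite vM big1 // => j _; rewrite mxE mul0r.
under [RHS]eq_bigr => j _ do rewrite !mxE big_distrl.
rewrite exchange_big; apply: eq_bigr => t _ /=.
rewrite dE (fsE t) ser_coef_sum big_distrr /=; apply: eq_bigr => j _.
by rewrite ser_coefZ /M mxE mulrA.
Qed.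

Lemma W_seq_span_lah n m f : [pchar F] =i pred0 -> (0 < n)%N -> W n m f ->
  seq_span (lah_sym_prods m n) f.
Proof.
move=> charF0 n_gt0 [Vf Tf]; apply: Vm_mon_span_lah Vf _.
exact/sym_ideal_mon_span/(TxN_sym_ideal n_gt0 charF0).
Qed.

End FreeAlgebra.

Theorem lemma5p1 (F : fieldType) (charF0 : [pchar F]%R =i pred0) (n m : nat)
    (n_gt0 : (0 < n)%N) (n_le_m : (n <= m)%N) (fs : seq (ser F)) :
  (forall i, (i < size fs)%N -> W n m (nth (@ser0 F) fs i)) -> lin_indep fs ->
  (size fs <= 'C(m, n) * (m.-1`! %/ n.-1`!))%N.
Proof.
move=> W_fs indep_fs.
have span_fs i : (i < size fs)%N -> seq_span (lah_sym_prods F m n) fs`_i.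
  by move=> i_lt; apply: W_seq_span_lah charF0 n_gt0 (W_fs i i_lt).
apply: leq_trans (lin_indep_leq_size_span indep_fs span_fs) _.
by rewrite size_map size_lah_blocks_div ?n_gt0.
Qed.
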